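(* Let $Q$ be a quantity space over a field $K$, and let $\mathsf{E}=\{\mathsf{e}_1,\ldots,\mathsf{e}_n\}$ be a basis for the abelian group $Q/{\sim}$. Then there is a subset $E=\{e_1,\ldots,e_n\}$ of $Q$ such that $e_i\in\mathsf{e}_i$ for each $i$ and $E$ is a basis for $Q$.
   Context: A scalable monoid over a (unital, associative) ring $R$ is a monoid $X$ (identity $1_X$, product written $xy$) together with a map $R\times X\to X$, $(\alpha,x)\mapsto\alpha\cdot x$, such that $1\cdot x=x$, $\alpha\cdot(\beta\cdot x)=\alpha\beta\cdot x$ and $\alpha\cdot(xy)=(\alpha\cdot x)y=x(\alpha\cdot y)$. A quantity space over a field $K$ is a commutative scalable monoid $Q$ over $K$ for which there exists a basis, i.e. a finite set $\{e_1,\ldots,e_n\}$ of invertible elements of $Q$ such that every $x\in Q$ has a unique expansion $x=\mu\cdot\prod_{i=1}^n e_i^{k_i}$ with $\mu\in K$ and $k_i\in\mathbb{Z}$. On $Q$, $x\sim y$ means $\alpha\cdot x=\beta\cdot y$ for some $\alpha,\beta\in K$; $[x]$ is the class of $x$; $Q/{\sim}$ is the set of classes with $[x][y]=[xy]$, an abelian group. A basis of a finitely generated abelian group $G$ is a set $\{\varepsilon_1,\ldots,\varepsilon_n\}\subseteq G$ such that every $g\in G$ has a unique expansion $g=\prod_{i=1}^n\varepsilon_i^{k_i}$ with $k_i\in\mathbb{Z}$. *)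

From HB Require Import structures.
From mathcomp Require Import all_boot all_order all_algebra.
Set Implicit Arguments. Unset Strict Implicit. Unset Printing Implicit Defensive.
Import GRing.Theory.
Local Open Scope ring_scope.

Record scalable_monoid (K : fieldType) := ScalableMonoid {
  sm_carrier :> Type;
  smul : sm_carrier -> sm_carrier -> sm_carrier;
  sone : sm_carrier;
  sscale : K -> sm_carrier -> sm_carrier;
  smulA : forall x y z, smul x (smul y z) = smul (smul x y) z;
  smul1x : forall x, smul sone x = x;
  smulx1 : forall x, smul x sone = x;
  sscale1 : forall x, sscale 1 x = x;
  sscaleA : forall a b x, sscale a (sscale b x) = sscale (a * b) x;
  sscaleMl : forall a x y, sscale a (smul x y) = smul (sscale a x) y;
  sscaleMr : forall a x y, sscale a (smul x y) = smul x (sscale a y)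
}.

Section QS.
Variables (K : fieldType) (Q : scalable_monoid K).

Definition commutative_sm : Prop := forall x y : Q, smul x y = smul y x.

(* integer power of e, given an inverse f of e *)
Definition zpow (e f : Q) (k : int) : Q :=
  match k with
  | Posz m => iter m (smul e) (sone Q)
  | Negz m => iter m.+1 (smul f) (sone Q)
  end.

Definition qprod n (e f : 'I_n -> Q) (k : {ffun 'I_n -> int}) : Q :=
  foldr (fun i acc => smul (zpow (e i) (f i) (k i)) acc) (sone Q) (enum 'I_n).

Definition is_qbasis n (e : 'I_n -> Q) : Prop :=
  exists f : 'I_n -> Q,
    (forall i, smul (e i) (f i) = sone Q /\ smul (f i) (e i) = sone Q) /\
    forall x : Q, exists mu : K, exists k : {ffun 'I_n -> int},
      x = sscale mu (qprod e f k) /\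
      forall (mu' : K) (k' : {ffun 'I_n -> int}),
        x = sscale mu' (qprod e f k') -> mu' = mu /\ k' = k.

Definition quantity_space : Prop :=
  commutative_sm /\ exists n, exists e : 'I_n -> Q, is_qbasis e.

Definition qsim (x y : Q) : Prop := exists a b : K, sscale a x = sscale b y.

Definition qclass (x : Q) : Q -> Prop := fun y => qsim x y.
Definition is_qclass (C : Q -> Prop) : Prop :=
  exists x, forall y, C y <-> qsim x y.
Definition cl_eq (C D : Q -> Prop) : Prop := forall y, C y <-> D y.

(* group operations on Q/~ : [x][y] = [xy], [x]^-1 = [y] with [xy] = [1] *)
Definition cl_mul (C D : Q -> Prop) : Q -> Prop :=
  fun z => exists x y, C x /\ D y /\ qsim z (smul x y).
Definition cl_inv (C : Q -> Prop) : Q -> Prop :=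
  fun z => exists x, C x /\ qsim (smul z x) (sone Q).
Definition cl_one : Q -> Prop := qclass (sone Q).
Definition cl_exp (C : Q -> Prop) (k : int) : Q -> Prop :=
  match k with
  | Posz m => iter m (cl_mul C) cl_one
  | Negz m => iter m.+1 (cl_mul (cl_inv C)) cl_one
  end.
Definition cl_prod n (eps : 'I_n -> (Q -> Prop)) (k : {ffun 'I_n -> int}) :=
  foldr (fun i acc => cl_mul (cl_exp (eps i) (k i)) acc) cl_one (enum 'I_n).

Definition is_class_basis n (eps : 'I_n -> (Q -> Prop)) : Prop :=
  (forall i, is_qclass (eps i)) /\
  forall x : Q, exists k : {ffun 'I_n -> int},
    cl_eq (qclass x) (cl_prod eps k) /\
    forall k' : {ffun 'I_n -> int}, cl_eq (qclass x) (cl_prod eps k') -> k' = k.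

End QS.

From mathcomp Require Import all_boot all_order all_algebra.
From mathcomp Require Import zify.
From Stdlib Require Import ClassicalEpsilon.
Set Implicit Arguments. Unset Strict Implicit. Unset Printing Implicit Defensive.
Import GRing.Theory.
Local Open Scope ring_scope.

(* Fix any basis b of Q.  Unique expansion x = mu . prod_i b_i^(k_i) makes the
   exponent vector qdim x a monoid morphism Q -> Z^m whose fibres are exactly
   the classes of ~, so Q/~ is identified with Z^m and each class eps_i with a
   vector c_i.  The quantities e_i := prod_j b_j^(c_i j) lie in eps_i, and
   prod_i e_i^(k_i) = prod_j b_j^(sum_i k_i c_i j); hence expansions over e
   are expansions over b whose exponent vector is written in the basis c of
   Z^m, and both existence and uniqueness transfer. *)

Section CommutativeScalableMonoid.
Variables (K : fieldType) (Q : scalable_monoid K).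
Hypothesis smulC : commutative_sm Q.
Local Notation "x ** y" := (smul x y) (at level 40, left associativity).
Local Notation one := (sone Q).

Lemma smulACA (a b c d : Q) : (a ** b) ** (c ** d) = (a ** c) ** (b ** d).
Proof.
rewrite -!smulA; congr (smul a _); rewrite !smulA; congr (smul _ d); exact: smulC.
Qed.

Lemma smul_sscale (a b : K) (x y : Q) :
  sscale a x ** sscale b y = sscale (a * b) (x ** y).
Proof. by rewrite -sscaleMl -sscaleMr sscaleA. Qed.

Variables (e f : Q).
Hypotheses (mul_ef : e ** f = one) (mul_fe : f ** e = one).

Lemma zpow_addr1 (a : int) : zpow e f (a + 1) = e ** zpow e f a.
Proof.
case: a => [m|[|m]].
- by have -> : Posz m + 1 = Posz m.+1 by lia.
- by rewrite /= smulx1 mul_ef.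
- have -> : Negz m.+1 + 1 = Negz m by lia.
  by rewrite /= smulA mul_ef smul1x.
Qed.

Lemma zpow_subr1 (a : int) : zpow e f (a - 1) = f ** zpow e f a.
Proof.
case: a => [[|m]|m] //.
- have -> : Posz m.+1 - 1 = Posz m by lia.
  by rewrite /= smulA mul_fe smul1x.
- by have -> : Negz m - 1 = Negz m.+1 by lia.
Qed.

Lemma zpowD (a b : int) : zpow e f (a + b) = zpow e f a ** zpow e f b.
Proof.
case: b => m; elim: m => [|m IH].
- by rewrite addr0 /= smulx1.
- have -> : Posz m.+1 = Posz m + 1 by lia.
  by rewrite addrA !zpow_addr1 IH !smulA (smulC e).
- have -> : Negz 0 = 0 - 1 by lia.
  by rewrite addrA addr0 zpow_subr1 /= smulx1 smulC.
- have -> : Negz m.+1 = Negz m - 1 by lia.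
  by rewrite addrA !zpow_subr1 IH !smulA (smulC f).
Qed.

End CommutativeScalableMonoid.

Section FixedBasis.
Variables (K : fieldType) (Q : scalable_monoid K).
Hypothesis smulC : commutative_sm Q.
Local Notation "x ** y" := (smul x y) (at level 40, left associativity).
Local Notation one := (sone Q).
Variables (m : nat) (b g : 'I_m -> Q).
Hypothesis mul_bg : forall i, b i ** g i = one /\ g i ** b i = one.
Hypothesis b_expansion : forall x : Q, exists mu : K, exists k : {ffun 'I_m -> int},
  x = sscale mu (qprod b g k) /\
  forall (mu' : K) (k' : {ffun 'I_m -> int}),
    x = sscale mu' (qprod b g k') -> mu' = mu /\ k' = k.

Local Notation V := {ffun 'I_m -> int}.
Local Notation D := (qprod b g).

Lemma qprodD (k k' : V) : D k ** D k' = D (k + k').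
Proof.
rewrite /qprod; elim: (enum 'I_m) => [|i s IH] /=; first by rewrite smulx1.
have [mul_bgi mul_gbi] := mul_bg i.
by rewrite smulACA // IH ffunE zpowD.
Qed.

Lemma qprod0 : D 0 = one.
Proof.
rewrite /qprod; elim: (enum 'I_m) => [|i s IH] //=.
by rewrite IH ffunE /= smulx1.
Qed.

Lemma iter_qprod (c : V) p : iter p (smul (D c)) one = D (c *+ p).
Proof.
elim: p => [|p IH]; first by rewrite mulr0n qprod0.
by rewrite iterS IH qprodD -mulrS.
Qed.

Lemma zpow_qprod (c : V) a : zpow (D c) (D (- c)) a = D (c *~ a).
Proof.
case: a => p; first exact: iter_qprod.
by rewrite /zpow iter_qprod mulNrn.
Qed.

Lemma qexpansion_uniq x a d a' d' :
  x = sscale a (D d) -> x = sscale a' (D d') -> a = a' /\ d = d'.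
Proof.
move=> x_ad x_ad'; have [mu [k [_ uniq_k]]] := b_expansion x.
by have [-> ->] := uniq_k _ _ x_ad; have [-> ->] := uniq_k _ _ x_ad'.
Qed.

Lemma qexpansion_exists x : exists p : K * V, x = sscale p.1 (D p.2).
Proof. by have [mu [k [x_mu _]]] := b_expansion x; exists (mu, k). Qed.

Definition qcoord x : K * V :=
  sval (constructive_indefinite_description _ (qexpansion_exists x)).
Definition qcoef x := (qcoord x).1.
Definition qdim x := (qcoord x).2.

Lemma qcoordP x : x = sscale (qcoef x) (D (qdim x)).
Proof. exact: proj2_sig (constructive_indefinite_description _ (qexpansion_exists x)). Qed.

Lemma qdimE x a d : x = sscale a (D d) -> qdim x = d.
Proof. by move=> x_ad; have [_ ->] := qexpansion_uniq x_ad (qcoordP x). Qed.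

Lemma qdimM x y : qdim (x ** y) = qdim x + qdim y.
Proof.
apply: (@qdimE _ (qcoef x * qcoef y)).
by rewrite {1}(qcoordP x) {1}(qcoordP y) smul_sscale // qprodD.
Qed.

Lemma qdim_qprod d : qdim (D d) = d.
Proof. by apply: (@qdimE _ 1); rewrite sscale1. Qed.

Lemma qdim1 : qdim one = 0.
Proof. by rewrite -qprod0 qdim_qprod. Qed.

Lemma qdimZ a x : qdim (sscale a x) = qdim x.
Proof. by apply: (@qdimE _ (a * qcoef x)); rewrite {1}(qcoordP x) sscaleA. Qed.

Lemma qsimE x y : qsim x y <-> qdim x = qdim y.
Proof.
split=> [[a [c axcy]] | xy]; first by rewrite -(qdimZ a x) axcy qdimZ.
by exists 0, 0; rewrite (qcoordP x) (qcoordP y) !sscaleA !mul0r xy.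
Qed.

Definition is_dim_class (C : Q -> Prop) (v : V) := forall z, C z <-> qdim z = v.

Lemma is_dim_class_qclass x : is_dim_class (qclass x) (qdim x).
Proof. by move=> z; rewrite /qclass qsimE; split=> ->. Qed.

Lemma is_dim_class_exists C : is_qclass C -> exists v, is_dim_class C v.
Proof.
case=> x Cx; exists (qdim x) => z; rewrite Cx.
exact: is_dim_class_qclass.
Qed.

Lemma is_dim_class_one : is_dim_class (@cl_one _ Q) 0.
Proof. by rewrite -qdim1; apply: is_dim_class_qclass. Qed.

Lemma is_dim_class_mul C E c d :
  is_dim_class C c -> is_dim_class E d -> is_dim_class (cl_mul C E) (c + d).
Proof.
move=> dimC dimE z; split.
- by case=> x [y [/dimC <- [/dimE <- /qsimE]]]; rewrite qdimM.
- move=> dim_z; exists (D c), (D d).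
  by rewrite dimC dimE qsimE qdimM !qdim_qprod.
Qed.

Lemma is_dim_class_inv C c : is_dim_class C c -> is_dim_class (cl_inv C) (- c).
Proof.
move=> dimC z; split.
- case=> x [/dimC <- /qsimE]; rewrite qdimM qdim1 => /eqP.
  by rewrite addr_eq0 => /eqP.
- move=> dim_z; exists (D c).
  by rewrite dimC qsimE qdimM qdim_qprod qdim1 dim_z addNr.
Qed.

Lemma is_dim_class_iter C c p :
  is_dim_class C c -> is_dim_class (iter p (cl_mul C) (@cl_one _ Q)) (c *+ p).
Proof.
move=> dimC; elim: p => [|p IH]; first by rewrite mulr0n; apply: is_dim_class_one.
by rewrite iterS mulrS; apply: is_dim_class_mul.
Qed.

Lemma is_dim_class_exp C c a :
  is_dim_class C c -> is_dim_class (cl_exp C a) (c *~ a).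
Proof.
move=> dimC; case: a => p; first exact: is_dim_class_iter.
have -> : c *~ Negz p = (- c) *+ p.+1 by rewrite mulNrn.
apply: is_dim_class_iter.
exact: is_dim_class_inv.
Qed.

Lemma is_dim_class_prod n (eps : 'I_n -> Q -> Prop) (c : 'I_n -> V) :
  (forall i, is_dim_class (eps i) (c i)) -> forall k : {ffun 'I_n -> int},
  is_dim_class (cl_prod eps k) (\sum_(i <- enum 'I_n) c i *~ k i).
Proof.
move=> dim_eps k; rewrite /cl_prod; elim: (enum 'I_n) => [|i s IH] /=.
  by rewrite big_nil; apply: is_dim_class_one.
by rewrite big_cons; apply: is_dim_class_mul => //; apply: is_dim_class_exp.
Qed.

Lemma cl_eq_dim C E c d :
  is_dim_class C c -> is_dim_class E d -> cl_eq C E <-> c = d.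
Proof.
move=> dimC dimE; split=> [CE | cd z]; last by rewrite dimC dimE cd.
have : C (D c) by rewrite dimC qdim_qprod.
by rewrite CE dimE qdim_qprod.
Qed.

Lemma qprod_qprod n (c : 'I_n -> V) (k : {ffun 'I_n -> int}) :
  qprod (fun i => D (c i)) (fun i => D (- c i)) k
  = D (\sum_(i <- enum 'I_n) c i *~ k i).
Proof.
rewrite {1}/qprod; elim: (enum 'I_n) => [|i s IH] /=.
  by rewrite big_nil; exact: (esym qprod0).
by rewrite big_cons IH zpow_qprod; exact: qprodD.
Qed.

Lemma class_basis_lift n (eps : 'I_n -> Q -> Prop) :
  is_class_basis eps -> exists e : 'I_n -> Q, (forall i, eps i (e i)) /\ is_qbasis e.
Proof.
case=> eps_class eps_expansion.
pose c i := sval (constructive_indefinite_description _ (is_dim_class_exists (eps_class i))).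
have dim_eps i : is_dim_class (eps i) (c i) by exact: proj2_sig.
have dim_prod := is_dim_class_prod dim_eps.
exists (fun i => D (c i)); split=> [i | ]; first by rewrite dim_eps qdim_qprod.
exists (fun i => D (- c i)); split=> [i | x].
  by rewrite !qprodD addrN addNr qprod0.
have [k [x_k uniq_k]] := eps_expansion x.
have dim_x := (cl_eq_dim (is_dim_class_qclass x) (dim_prod k)).1 x_k.
exists (qcoef x), k; split=> [ | mu' k']; first by rewrite qprod_qprod -dim_x -qcoordP.
rewrite qprod_qprod => x_k'.
have [<- dim_x'] := qexpansion_uniq x_k' (qcoordP x).
split=> //; apply: uniq_k.
by rewrite (cl_eq_dim (is_dim_class_qclass x) (dim_prod k')).
Qed.

End FixedBasis.

Theorem proposition3p24 (K : fieldType) (Q : scalable_monoid K)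
  (HQ : quantity_space Q) (n : nat) (eps : 'I_n -> (Q -> Prop))
  (Heps : is_class_basis eps) :
  exists e : 'I_n -> Q, (forall i, eps i (e i)) /\ is_qbasis e.
Proof.
case: HQ => smulC [m [b [g [mul_bg b_expansion]]]].
exact: (class_basis_lift smulC mul_bg b_expansion Heps).
Qed.
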